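(* Let $N>1$ be an integer, $0<\epsilon<e$, $\tfrac12<\beta<1$, and $K=\lceil \log_{1/\beta}(N)\rceil\cdot\lceil \log(e/\epsilon)/\log(\beta/(1-\beta))\rceil$. Let $H$ be the $(N+1)\times(N+1)$ matrix with $H_{jk}=\Lambda\!\left(\tfrac{j+k}{2}\right)$, $0\le j,k\le N$, where $\Lambda(z)=\Gamma(z+1/2)/\Gamma(z+1)$. Then there is an $(N+1)\times(N+1)$ real matrix $\tilde H$ of rank at most $K+1$ such that $\max_{0\le j,k\le N}|H_{jk}-\tilde H_{jk}|\le\epsilon$.
   Context: $\Gamma$ denotes the gamma function; $e$ is Euler's number; $\log$ is the natural logarithm. *)

From Stdlib Require Import Reals Lra Lia ZArith.
Open Scope R_scope.

(* g is the value of Euler's integral  Gamma(x) = int_0^oo t^(x-1) e^(-t) dt,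
   understood as the (improper) limit of Riemann integrals over [a,b],
   a -> 0+, b -> +oo. *)
Definition is_Gamma (x g : R) : Prop :=
  forall eps, 0 < eps ->
  exists A B, 0 < A /\
    forall a b, 0 < a -> a <= A -> B <= b ->
      exists pr : Riemann_integrable (fun t => Rpower t (x - 1) * exp (- t)) a b,
        Rabs (RiemannInt pr - g) < eps.

Fixpoint rsum (r : nat) (f : nat -> R) : R :=
  match r with O => 0 | S r' => rsum r' f + f r' end.

(* Rank of an n x n real matrix (entries M j k, 0 <= j,k < n) is at most r:
   M is a sum of r rank-one matrices u_l v_l^T (rank factorization). *)
Definition rank_at_most (n : nat) (M : nat -> nat -> R) (r : nat) : Prop :=
  exists (u v : nat -> nat -> R),
    forall j k, (j < n)%nat -> (k < n)%nat ->
      M j k = rsum r (fun l => u l j * v l k).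

From Stdlib Require Import Reals Lra Lia ZArith.
From Coquelicot Require Import Coquelicot.
Open Scope R_scope.

(* Lambda (m/2) = 2/sqrt(pi) * int_0^(pi/2) sin^m t dt: both sides obey the Wallis recurrence
   Lambda (z + 1) = (z + 1/2) / (z + 1) * Lambda z, and log-convexity of Gamma forces
   Gamma (1/2)^2 = pi.  Hence H_jk = L (s^(j+k)) for the positive functional
   L g = 2/sqrt(pi) * int_0^(pi/2) g (sin t) dt, with L 1 = sqrt(pi) <= e.
   Split 1 <= j <= N into p = ceil (log_(1/beta) N) blocks N beta^(i+1) < j <= N beta^i with top
   B_i = floor (N beta^i).  On block i multiply s^(j+k) by the first d terms of
   ((1 - s) + s)^(B_i - j); each term C(B_i - j, l) (1 - s)^l s^(B_i - l + k) separates j from k,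
   so the blocks have rank <= p d, and the row j = 0 adds one.  As B_i - j <= rho j with
   rho = (1 - beta) / beta, the dropped tail is at most s^j ((B_i - j)(1 - s))^d / d! <= rho^d,
   so each entry is off by at most rho^d sqrt(pi) <= eps. *)

Lemma exp_le_compat x y : x <= y -> exp x <= exp y.
Proof.
  intros h; destruct (Rle_lt_or_eq_dec x y h) as [hlt | ->]; [|lra].
  now apply Rlt_le, exp_increasing.
Qed.

Lemma pow_div_fact_le_exp y n : 0 <= y -> y ^ n / INR (fact n) <= exp y.
Proof.
  intros hy. eapply Rle_trans; [|apply (exp_ge_taylor y n hy)].
  destruct n as [|n]; [simpl; lra|].
  cbn [sum_f_R0].
  enough (0 <= sum_f_R0 (fun k => y ^ k / INR (fact k)) n) by lra.
  apply cond_pos_sum; intros k.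
  apply Rmult_le_pos; [now apply pow_le|].
  apply Rlt_le, Rinv_0_lt_compat, lt_0_INR, lt_O_fact.
Qed.

Lemma exists_nat_ge x : exists m : nat, x <= INR m.
Proof.
  destruct (archimed x) as [Hup _].
  exists (Z.to_nat (up x)); destruct (Z_le_gt_dec 0 (up x)) as [h|h].
  - rewrite INR_IZR_INZ, Z2Nat.id by lia; lra.
  - replace (Z.to_nat (up x)) with 0%nat by lia.
    assert (IZR (up x) < 0) by (apply IZR_lt; lia). simpl; lra.
Qed.

Lemma Rle_of_le_plus_eps u v c : 0 < c ->
  (forall eps, 0 < eps -> u <= v + c * eps) -> u <= v.
Proof.
  intros hc H; destruct (Rle_dec u v) as [h|h]; [exact h|].
  specialize (H ((u - v) / (2 * c))).
  assert (c * ((u - v) / (2 * c)) = (u - v) / 2) by (field; lra).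
  assert (0 < (u - v) / (2 * c)) by (apply Rdiv_lt_0_compat; lra).
  specialize (H ltac:(lra)); lra.
Qed.

Lemma Req_of_abs_le_eps u v c : 0 < c ->
  (forall eps, 0 < eps -> Rabs (u - v) <= c * eps) -> u = v.
Proof.
  intros hc H; apply Rle_antisym;
    apply (Rle_of_le_plus_eps _ _ c hc); intros eps he;
    specialize (H eps he); apply Rabs_le_between' in H; lra.
Qed.

Lemma Rle_of_forall_mul_le A B : 0 <= A ->
  (forall n : nat, A * (1 - / (INR n + 1)) <= B) -> A <= B.
Proof.
  intros hA H; apply (Rle_of_le_plus_eps _ _ (A + 1)); [lra|]; intros eps he.
  destruct (exists_nat_ge (/ eps)) as [n hn]; specialize (H n).
  assert (0 < INR n + 1) by (pose proof (pos_INR n); lra).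
  assert (/ (INR n + 1) <= eps).
  { rewrite <- (Rinv_inv eps); apply Rinv_le_contravar; [apply Rinv_0_lt_compat|]; lra. }
  assert (A * / (INR n + 1) <= A * eps) by (apply Rmult_le_compat_l; lra).
  nra.
Qed.

Lemma pow_le_pow_le_1 x m n : 0 <= x <= 1 -> (m <= n)%nat -> x ^ n <= x ^ m.
Proof.
  intros hx hmn; replace n with (m + (n - m))%nat by lia; rewrite pow_add.
  rewrite <- (Rmult_1_r (x ^ m)) at 2; apply Rmult_le_compat_l; [apply pow_le; lra|].
  rewrite <- (pow1 (n - m)); apply pow_incr; lra.
Qed.

Lemma exp_mul_INR a j : exp a ^ j = exp (INR j * a).
Proof.
  induction j; simpl pow; [rewrite Rmult_0_l, exp_0; reflexivity|].
  rewrite IHj, S_INR, <- exp_plus; f_equal; ring.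
Qed.

Lemma rsum_ext r f g : (forall l, (l < r)%nat -> f l = g l) -> rsum r f = rsum r g.
Proof. induction r; intros H; simpl; [reflexivity|]; rewrite IHr, H; auto. Qed.

Lemma rsum_mulr c r f : c * rsum r f = rsum r (fun l => c * f l).
Proof. induction r; simpl; [ring|]; rewrite <- IHr; ring. Qed.

Lemma rsum_plus r f g : rsum r (fun l => f l + g l) = rsum r f + rsum r g.
Proof. induction r; simpl; [ring|]; rewrite IHr; ring. Qed.

Lemma rsum_succ_l r f : rsum (S r) f = f 0%nat + rsum r (fun l => f (S l)).
Proof. induction r; simpl in *; [ring|]; rewrite IHr; ring. Qed.

Lemma rsum_add r s f : rsum (r + s) f = rsum r f + rsum s (fun l => f (r + l)%nat).
Proof.
  induction s; simpl; [rewrite Nat.add_0_r; ring|].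
  rewrite Nat.add_succ_r; simpl; rewrite IHs; ring.
Qed.

Lemma rsum_nested p d G : (0 < d)%nat ->
  rsum (p * d) (fun m => G (m / d)%nat (m mod d)%nat) = rsum p (fun i => rsum d (G i)).
Proof.
  intros hd; induction p as [|p IH]; [reflexivity|].
  simpl rsum at 2; rewrite <- IH.
  replace (S p * d)%nat with (p * d + d)%nat by lia; rewrite rsum_add; f_equal.
  apply rsum_ext; intros l hl; f_equal.
  - rewrite Nat.div_add_l, Nat.div_small by lia; lia.
  - rewrite Nat.add_comm, Nat.Div0.mod_add; apply Nat.mod_small; lia.
Qed.

Lemma rsum_eq_0 r f : (forall l, (l < r)%nat -> f l = 0) -> rsum r f = 0.
Proof. induction r; intros H; simpl; [reflexivity|]; rewrite IHr, H; auto; ring. Qed.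

Lemma rsum_eq_single r f l0 : (l0 < r)%nat ->
  (forall l, (l < r)%nat -> l <> l0 -> f l = 0) -> rsum r f = f l0.
Proof.
  induction r; intros hl0 H; [lia|]; simpl.
  destruct (Nat.eq_dec l0 r) as [-> | hne].
  - rewrite rsum_eq_0; [ring|]; intros; apply H; lia.
  - rewrite IHr, (H r) by (try intros; try apply H; lia); ring.
Qed.

Lemma rank_at_most_blocks n p d (M : nat -> nat -> R) (u0 v0 : nat -> R)
    (u v : nat -> nat -> nat -> R) : (0 < d)%nat ->
  (forall j k, (j < n)%nat -> (k < n)%nat ->
     M j k = u0 j * v0 k + rsum p (fun i => rsum d (fun l => u i l j * v i l k))) ->
  rank_at_most n M (S (p * d)).
Proof.
  intros hd HM.
  exists (fun l j => match l with O => u0 j | S m => u (m / d)%nat (m mod d)%nat j end).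
  exists (fun l k => match l with O => v0 k | S m => v (m / d)%nat (m mod d)%nat k end).
  intros j k hj hk; rewrite HM, rsum_succ_l by assumption; f_equal.
  exact (eq_sym (rsum_nested p d (fun i l => u i l j * v i l k) hd)).
Qed.

Lemma continuous_pow (g : R -> R) m x : continuous g x -> continuous (fun y => g y ^ m) x.
Proof.
  intros hg; induction m as [|m IH]; simpl.
  - apply continuous_const.
  - now apply (continuous_mult (K := R_AbsRing) g (fun y => g y ^ m)).
Qed.

Definition continuous_everywhere (g : R -> R) : Prop := forall x, continuous g x.

Lemma continuous_everywhere_const c : continuous_everywhere (fun _ => c).
Proof. intros x; apply continuous_const. Qed.

Lemma continuous_everywhere_pow m : continuous_everywhere (fun s => s ^ m).
Proof. intros x; apply continuous_pow, continuous_id. Qed.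

Lemma continuous_everywhere_mult g h : continuous_everywhere g -> continuous_everywhere h ->
  continuous_everywhere (fun s => g s * h s).
Proof. intros Hg Hh x; apply (continuous_mult (K := R_AbsRing) g h); auto. Qed.

Lemma continuous_everywhere_minus g h : continuous_everywhere g -> continuous_everywhere h ->
  continuous_everywhere (fun s => g s - h s).
Proof. intros Hg Hh x; apply (continuous_minus (V := R_NormedModule) g h); auto. Qed.

Lemma continuous_everywhere_rsum r (g : nat -> R -> R) :
  (forall l, continuous_everywhere (g l)) ->
  continuous_everywhere (fun s => rsum r (fun l => g l s)).
Proof.
  intros H x; induction r; simpl; [apply continuous_const|].
  apply (continuous_plus (V := R_NormedModule) (fun s => rsum r (fun l => g l s)) (g r));
    [exact IHr | apply H].
Qed.

Lemma continuous_everywhere_monomial l q : continuous_everywhere (fun s => (1 - s) ^ l * s ^ q).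
Proof.
  intros x; apply (continuous_mult (K := R_AbsRing) (fun s => (1 - s) ^ l)); apply continuous_pow;
    [apply (continuous_minus (V := R_NormedModule)); [apply continuous_const|] |];
    apply continuous_id.
Qed.

(** * The Gamma function as Euler's integral *)

Definition gamma_integrand (x t : R) : R := Rpower t (x - 1) * exp (- t).

Lemma derivable_pt_lim_exp_opp t : derivable_pt_lim (fun t => exp (- t)) t (- exp (- t)).
Proof.
  replace (- exp (- t)) with (exp (- t) * (- (1))) by ring.
  apply (derivable_pt_lim_comp (fun t => - t) exp).
  - apply derivable_pt_lim_opp, derivable_pt_lim_id.
  - apply derivable_pt_lim_exp.
Qed.

Lemma derivable_pt_lim_Rpower_exp_opp x t : 0 < t ->
  derivable_pt_lim (fun t => Rpower t x * exp (- t)) t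
    (x * Rpower t (x - 1) * exp (- t) - Rpower t x * exp (- t)).
Proof.
  intros ht.
  replace (_ - _) with (x * Rpower t (x - 1) * exp (- t) + Rpower t x * - exp (- t)) by ring.
  apply (derivable_pt_lim_mult (fun t => Rpower t x) (fun t => exp (- t))).
  - now apply derivable_pt_lim_power.
  - apply derivable_pt_lim_exp_opp.
Qed.

Lemma gamma_integrand_pos x t : 0 < t -> 0 < gamma_integrand x t.
Proof. intros; apply Rmult_lt_0_compat; apply exp_pos. Qed.

Lemma continuous_gamma_integrand x t : 0 < t -> continuous (gamma_integrand x) t.
Proof.
  intros ht; apply continuity_pt_filterlim, derivable_continuous_pt.
  eexists; now apply derivable_pt_lim_Rpower_exp_opp.
Qed.

Lemma ex_RInt_gamma_integrand x a b : 0 < a -> a <= b -> ex_RInt (gamma_integrand x) a b.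
Proof.
  intros ha hab; apply (ex_RInt_continuous (V := R_CompleteNormedModule)); intros t ht.
  rewrite Rmin_left in ht by lra; apply continuous_gamma_integrand; lra.
Qed.

Lemma RInt_gamma_integrand_succ x a b : 0 < x -> 0 < a -> a <= b ->
  RInt (gamma_integrand (x + 1)) a b
  = x * RInt (gamma_integrand x) a b + Rpower a x * exp (- a) - Rpower b x * exp (- b).
Proof.
  intros hx ha hab.
  assert (HI : is_RInt (fun t => gamma_integrand (x + 1) t - x * gamma_integrand x t) a b
                 (- (Rpower b x * exp (- b)) - - (Rpower a x * exp (- a)))).
  { apply (is_RInt_derive (V := R_CompleteNormedModule) (fun t => - (Rpower t x * exp (- t)))).
    - intros t ht; rewrite Rmin_left in ht by lra; apply is_derive_Reals.
      unfold gamma_integrand; replace (x + 1 - 1) with x by ring.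
      replace (Rpower t x * exp (- t) - x * (Rpower t (x - 1) * exp (- t)))
        with (- (x * Rpower t (x - 1) * exp (- t) - Rpower t x * exp (- t))) by ring.
      apply derivable_pt_lim_opp, derivable_pt_lim_Rpower_exp_opp; lra.
    - intros t ht; rewrite Rmin_left in ht by lra.
      apply (continuous_minus (V := R_NormedModule));
        [|apply (continuous_scal_r (V := R_NormedModule) x (gamma_integrand x))];
        apply continuous_gamma_integrand; lra. }
  apply (is_RInt_unique (V := R_CompleteNormedModule)) in HI.
  rewrite (RInt_minus (V := R_CompleteNormedModule) (gamma_integrand (x + 1))
             (fun t => x * gamma_integrand x t)) in HI.
  2: apply ex_RInt_gamma_integrand; auto.
  2: apply (ex_RInt_scal (V := R_NormedModule)), ex_RInt_gamma_integrand; auto.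
  rewrite (RInt_scal (V := R_CompleteNormedModule) (gamma_integrand x)) in HI
    by (apply ex_RInt_gamma_integrand; auto).
  unfold minus, plus, opp, scal in HI; simpl in HI; unfold mult in HI; simpl in HI; lra.
Qed.

Lemma RInt_gamma_integrand_one a b : a <= b ->
  RInt (gamma_integrand 1) a b = exp (- a) - exp (- b).
Proof.
  intros hab.
  assert (HI : is_RInt (fun t => exp (- t)) a b (- exp (- b) - - exp (- a))).
  { apply (is_RInt_derive (V := R_CompleteNormedModule) (fun t => - exp (- t))).
    - intros t _; apply is_derive_Reals.
      pose proof (derivable_pt_lim_opp _ _ _ (derivable_pt_lim_exp_opp t)) as D.
      rewrite Ropp_involutive in D; exact D.
    - intros t _; apply (continuous_comp (fun t => - t) exp).
      + apply (continuous_opp (V := R_NormedModule)), continuous_id.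
      + apply continuous_exp. }
  apply (is_RInt_unique (V := R_CompleteNormedModule)) in HI.
  replace (exp (- a) - exp (- b)) with (- exp (- b) - - exp (- a)) by ring.
  rewrite <- HI; apply RInt_ext; intros t _.
  unfold gamma_integrand, Rpower; rewrite Rminus_diag, Rmult_0_l, exp_0, Rmult_1_l; reflexivity.
Qed.

(* Limits along [a -> 0+, b -> +oo], the sense in which [is_Gamma] is an improper integral. *)
Definition ends : (R * R -> Prop) -> Prop :=
  filter_prod (at_right 0) (Rbar_locally p_infty).

Global Instance ends_proper_filter : ProperFilter ends.
Proof. apply filter_prod_proper. Qed.

Global Instance ends_filter : Filter ends.
Proof. apply ends_proper_filter. Qed.

Lemma at_right_0_intro (A : posreal) (P : R -> Prop) :
  (forall a, 0 < a < A -> P a) -> at_right 0 P.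
Proof.
  intros H; exists A; intros a ha ha0; apply H; split; [exact ha0|].
  unfold ball in ha; simpl in ha; unfold AbsRing_ball, abs, minus, plus, opp in ha; simpl in ha.
  apply Rabs_lt_between in ha; lra.
Qed.

Lemma ends_prod (Pa Pb : R -> Prop) :
  at_right 0 Pa -> Rbar_locally p_infty Pb -> ends (fun ab => Pa (fst ab) /\ Pb (snd ab)).
Proof. intros ha hb; apply (Filter_prod _ _ _ Pa Pb ha hb); simpl; auto. Qed.

Lemma ends_and P Q : ends P -> ends Q -> ends (fun ab => P ab /\ Q ab).
Proof. apply filter_and. Qed.

Lemma ends_witness P : ends P -> exists a b, 0 < a < b /\ P (a, b).
Proof.
  intros HP.
  assert (Hord : ends (fun ab => 0 < fst ab < 1 /\ 1 < snd ab)).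
  { apply (ends_prod (fun a => 0 < a < 1) (fun b => 1 < b));
      [apply (at_right_0_intro (mkposreal 1 Rlt_0_1)) | exists 1]; auto. }
  destruct (filter_ex _ (ends_and _ _ Hord HP)) as [[a b] [hab Pab]].
  exists a, b; simpl in hab; split; [lra | exact Pab].
Qed.

Lemma Rpower_at_right_0 x eps : 0 < x -> 0 < eps -> at_right 0 (fun a => Rpower a x < eps).
Proof.
  intros hx he.
  assert (hd : 0 < exp ((ln eps - 1) / x)) by apply exp_pos.
  apply (at_right_0_intro (mkposreal _ hd)); intros a ha; simpl in ha.
  apply Rle_lt_trans with (Rpower (exp ((ln eps - 1) / x)) x).
  - apply Rle_Rpower_l; lra.
  - unfold Rpower; rewrite ln_exp.
    replace (x * ((ln eps - 1) / x)) with (ln eps - 1) by (field; lra).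
    rewrite <- (exp_ln eps) at 2 by lra; apply exp_increasing; lra.
Qed.

(* Compare with [b ^ (m + 1) / (m + 1)! <= exp b] for an integer [m >= x]. *)
Lemma Rpower_exp_opp_p_infty x eps : 0 < eps ->
  Rbar_locally p_infty (fun b => Rpower b x * exp (- b) < eps).
Proof.
  intros he; destruct (exists_nat_ge x) as [m hm].
  set (F := INR (fact (S m))).
  assert (hF : 0 < F) by apply lt_0_INR, lt_O_fact.
  exists (Rmax 1 (2 * F / eps)); intros b hb.
  assert (hb1 : 1 < b) by (eapply Rle_lt_trans; [apply Rmax_l | exact hb]).
  assert (hbF : 2 * F < b * eps).
  { apply (Rmult_lt_compat_r eps) in hb; [|lra].
    eapply Rle_lt_trans; [|exact hb].
    replace (2 * F) with (2 * F / eps * eps) at 1 by (field; lra).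
    apply Rmult_le_compat_r; [lra | apply Rmax_r]. }
  assert (Hp : Rpower b x <= b ^ m) by (rewrite <- Rpower_pow by lra; apply Rle_Rpower; lra).
  assert (He : b ^ S m / F <= exp b) by (apply pow_div_fact_le_exp; lra).
  assert (0 < b ^ m) by (apply pow_lt; lra).
  rewrite exp_Ropp.
  apply Rle_lt_trans with (b ^ m / (b ^ S m / F)).
  - apply Rmult_le_compat; [apply Rlt_le, exp_pos | apply Rlt_le, Rinv_0_lt_compat, exp_pos
                           | exact Hp | apply Rinv_le_contravar; [|exact He]].
    apply Rdiv_lt_0_compat; [apply pow_lt|]; lra.
  - replace (b ^ m / (b ^ S m / F)) with (F / b) by (simpl; field; lra).
    apply (Rmult_lt_reg_r b); [lra|]; replace (F / b * b) with F by (field; lra); lra.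
Qed.

(* [t^(x-1) = t^(x-3/2) * t^(1/2)], and a square is nonnegative. *)
Lemma gamma_integrand_quadratic_ineq lam x t : 0 < t ->
  2 * lam * gamma_integrand x t
  <= lam ^ 2 * gamma_integrand (x - /2) t + gamma_integrand (x + /2) t.
Proof.
  intros ht; unfold gamma_integrand.
  set (P := Rpower t (x - /2 - 1)); set (s := Rpower t (/2)).
  assert (e1 : Rpower t (x - 1) = P * s) by (unfold P, s; rewrite <- Rpower_plus; f_equal; field).
  assert (e2 : Rpower t (x + /2 - 1) = P * s * s)
    by (unfold P, s; rewrite <- !Rpower_plus; f_equal; field).
  rewrite e1, e2.
  assert (0 < P * exp (- t)) by (apply Rmult_lt_0_compat; apply exp_pos).
  assert (0 <= P * exp (- t) * (lam - s) ^ 2) by (apply Rmult_le_pos; [lra | apply pow2_ge_0]).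
  nra.
Qed.

Lemma RInt_gamma_integrand_quadratic_ineq lam x a b : 0 < a -> a <= b ->
  2 * lam * RInt (gamma_integrand x) a b
  <= lam ^ 2 * RInt (gamma_integrand (x - /2)) a b + RInt (gamma_integrand (x + /2)) a b.
Proof.
  intros ha hab.
  assert (Hint : forall y, ex_RInt (gamma_integrand y) a b)
    by (intros; now apply ex_RInt_gamma_integrand).
  assert (E1 : RInt (fun t => 2 * lam * gamma_integrand x t) a b
               = 2 * lam * RInt (gamma_integrand x) a b)
    by exact (RInt_scal (V := R_CompleteNormedModule) _ _ _ _ (Hint x)).
  assert (E2 : RInt (fun t => lam ^ 2 * gamma_integrand (x - /2) t + gamma_integrand (x + /2) t) a b
               = lam ^ 2 * RInt (gamma_integrand (x - /2)) a b
                 + RInt (gamma_integrand (x + /2)) a b).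
  { rewrite (RInt_plus (V := R_CompleteNormedModule)
               (fun t => lam ^ 2 * gamma_integrand (x - /2) t) (gamma_integrand (x + /2))).
    - rewrite (RInt_scal (V := R_CompleteNormedModule) (gamma_integrand (x - /2))) by apply Hint.
      reflexivity.
    - apply (ex_RInt_scal (V := R_NormedModule) (gamma_integrand (x - /2))), Hint.
    - apply Hint. }
  rewrite <- E1, <- E2; apply RInt_le;
    [lra | | | intros; apply gamma_integrand_quadratic_ineq; lra].
  - apply (ex_RInt_scal (V := R_NormedModule) (gamma_integrand x)), Hint.
  - apply (ex_RInt_plus (V := R_NormedModule) (fun t => lam ^ 2 * gamma_integrand (x - /2) t));
      [apply (ex_RInt_scal (V := R_NormedModule) (gamma_integrand (x - /2))) |]; apply Hint.
Qed.

Section GammaFunction.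

Variable Gamma : R -> R.
Hypothesis HGamma : forall x, 0 < x -> is_Gamma x (Gamma x).

Lemma Gamma_ends x eps : 0 < x -> 0 < eps ->
  ends (fun ab => Rabs (RInt (gamma_integrand x) (fst ab) (snd ab) - Gamma x) < eps).
Proof.
  intros hx he; destruct (HGamma x hx eps he) as (A & B & hA & HAB).
  apply (Filter_prod _ _ _ (fun a => 0 < a < A) (fun b => B < b)).
  - now apply (at_right_0_intro (mkposreal A hA)).
  - now exists B.
  - intros a b [ha haA] hb; simpl.
    destruct (HAB a b ha (Rlt_le _ _ haA) (Rlt_le _ _ hb)) as [pr Hpr].
    unfold gamma_integrand; now rewrite (RInt_Reals _ _ _ pr).
Qed.

Lemma Gamma_succ x : 0 < x -> Gamma (x + 1) = x * Gamma x.
Proof.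
  intros hx; apply (Req_of_abs_le_eps _ _ (x + 3)); [lra|]; intros eps he.
  destruct (ends_witness _ (ends_and _ _
      (ends_and _ _ (Gamma_ends (x + 1) eps ltac:(lra) he) (Gamma_ends x eps hx he))
      (ends_prod _ _ (Rpower_at_right_0 x eps hx he) (Rpower_exp_opp_p_infty x eps he))))
    as (a & b & hab & (H1 & H2) & Ha & Hb); simpl in *.
  rewrite RInt_gamma_integrand_succ in H1 by lra.
  assert (0 < Rpower a x * exp (- a) < eps).
  { assert (exp (- a) <= 1) by (rewrite <- exp_0; apply exp_le_compat; lra).
    assert (0 < Rpower a x) by apply exp_pos.
    split; [apply Rmult_lt_0_compat; [lra | apply exp_pos] | nra]. }
  assert (0 < Rpower b x * exp (- b)) by (apply Rmult_lt_0_compat; apply exp_pos).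
  assert (HX : Rabs (x * (RInt (gamma_integrand x) a b - Gamma x)) <= x * eps).
  { rewrite Rabs_mult, Rabs_pos_eq by lra; apply Rmult_le_compat_l; lra. }
  apply Rabs_def2 in H1; apply Rabs_le_between in HX; apply Rabs_le; split; lra.
Qed.

Lemma Gamma_one : Gamma 1 = 1.
Proof.
  apply (Req_of_abs_le_eps _ _ 3); [lra|]; intros eps he.
  destruct (ends_witness _ (ends_and _ _ (Gamma_ends 1 eps Rlt_0_1 he)
      (ends_prod _ _ (Rpower_at_right_0 1 eps Rlt_0_1 he) (Rpower_exp_opp_p_infty 0 eps he))))
    as (a & b & hab & H & Ha & Hb); simpl in *.
  rewrite RInt_gamma_integrand_one in H by lra.
  rewrite Rpower_1 in Ha by lra; rewrite Rpower_O, Rmult_1_l in Hb by lra.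
  assert (1 - a <= exp (- a)) by apply exp_ineq1_le.
  assert (exp (- a) <= 1) by (rewrite <- exp_0; apply exp_le_compat; lra).
  pose proof (exp_pos (- b)).
  apply Rabs_def2 in H; apply Rabs_le; lra.
Qed.

Lemma Gamma_pos x : 0 < x -> 0 < Gamma x.
Proof.
  intros hx.
  set (c := RInt (gamma_integrand x) 1 2).
  assert (hc : 0 < c).
  { apply RInt_gt_0; [lra | intros; apply gamma_integrand_pos; lra |].
    intros; apply continuous_gamma_integrand; lra. }
  assert (Hends : ends (fun ab => fst ab <= 1 /\ 2 <= snd ab)).
  { apply (ends_prod (fun a => a <= 1) (fun b => 2 <= b)).
    - apply (at_right_0_intro (mkposreal 1 Rlt_0_1)); simpl; intros; lra.
    - exists 2; intros; lra. }
  destruct (ends_witness _ (ends_and _ _ (Gamma_ends x (c / 2) hx ltac:(lra)) Hends))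
    as (a & b & hab & H & ha1 & hb2); simpl in *.
  assert (Hsplit : RInt (gamma_integrand x) a b
      = RInt (gamma_integrand x) a 1 + c + RInt (gamma_integrand x) 2 b).
  { unfold c; rewrite <- (RInt_Chasles (V := R_CompleteNormedModule) _ a 1 b),
      <- (RInt_Chasles (V := R_CompleteNormedModule) _ 1 2 b);
      try apply ex_RInt_gamma_integrand; try lra.
    unfold plus; simpl; ring. }
  assert (0 <= RInt (gamma_integrand x) a 1)
    by (apply RInt_ge_0; [lra | apply ex_RInt_gamma_integrand; lra
                        | intros; apply Rlt_le, gamma_integrand_pos; lra]).
  assert (0 <= RInt (gamma_integrand x) 2 b)
    by (apply RInt_ge_0; [lra | apply ex_RInt_gamma_integrand; lra
                        | intros; apply Rlt_le, gamma_integrand_pos; lra]).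
  apply Rabs_def2 in H; lra.
Qed.

Lemma Gamma_quadratic_ineq lam x : /2 < x ->
  2 * lam * Gamma x <= lam ^ 2 * Gamma (x - /2) + Gamma (x + /2).
Proof.
  intros hx.
  apply (Rle_of_le_plus_eps _ _ (2 * Rabs lam + lam ^ 2 + 1)).
  { pose proof (Rabs_pos lam); pose proof (pow2_ge_0 lam); lra. }
  intros eps he.
  destruct (ends_witness _ (ends_and _ _ (Gamma_ends x eps ltac:(lra) he)
      (ends_and _ _ (Gamma_ends (x - /2) eps ltac:(lra) he)
                    (Gamma_ends (x + /2) eps ltac:(lra) he))))
    as (a & b & hab & H1 & H2 & H3); simpl in *.
  pose proof (RInt_gamma_integrand_quadratic_ineq lam x a b ltac:(lra) ltac:(lra)) as HI.
  apply Rabs_def2 in H1, H2, H3.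
  assert (lam * (Gamma x - RInt (gamma_integrand x) a b) <= Rabs lam * eps).
  { eapply Rle_trans; [apply Rle_abs|]; rewrite Rabs_mult.
    apply Rmult_le_compat_l; [apply Rabs_pos | apply Rabs_le; lra]. }
  assert (lam ^ 2 * (RInt (gamma_integrand (x - /2)) a b - Gamma (x - /2)) <= lam ^ 2 * eps)
    by (apply Rmult_le_compat_l; [apply pow2_ge_0 | lra]).
  lra.
Qed.

Lemma Gamma_sq_le x : /2 < x -> Gamma x ^ 2 <= Gamma (x - /2) * Gamma (x + /2).
Proof.
  intros hx; assert (hg : 0 < Gamma (x - /2)) by (apply Gamma_pos; lra).
  pose proof (Gamma_quadratic_ineq (Gamma x / Gamma (x - /2)) x hx) as H.
  apply (Rmult_le_compat_r (Gamma (x - /2))) in H; [|lra].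
  replace (2 * (Gamma x / Gamma (x - /2)) * Gamma x * Gamma (x - /2)) with (2 * Gamma x ^ 2) in H
    by (field; lra).
  replace (((Gamma x / Gamma (x - /2)) ^ 2 * Gamma (x - /2) + Gamma (x + /2)) * Gamma (x - /2))
    with (Gamma x ^ 2 + Gamma (x - /2) * Gamma (x + /2)) in H by (field; lra).
  lra.
Qed.

End GammaFunction.

(** * Wallis integrals and Lambda at half-integers *)

Lemma ex_RInt_sin_pow m a b : ex_RInt (fun t => sin t ^ m) a b.
Proof.
  apply (ex_RInt_continuous (V := R_CompleteNormedModule)); intros.
  apply continuous_pow, continuous_sin.
Qed.

Definition wallis (m : nat) : R := RInt (fun t => sin t ^ m) 0 (PI / 2).

Lemma wallis_0 : wallis 0 = PI / 2.
Proof.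
  unfold wallis; simpl; rewrite (RInt_const (V := R_CompleteNormedModule)).
  unfold scal; simpl; unfold mult; simpl; ring.
Qed.

Lemma wallis_1 : wallis 1 = 1.
Proof.
  assert (HI : is_RInt (fun t => sin t ^ 1) 0 (PI / 2) (- cos (PI / 2) - - cos 0)).
  { apply (is_RInt_derive (V := R_CompleteNormedModule) (fun t => - cos t)).
    - intros t _; apply is_derive_Reals; replace (sin t ^ 1) with (- - sin t) by ring.
      apply derivable_pt_lim_opp, derivable_pt_lim_cos.
    - intros; apply continuous_pow, continuous_sin. }
  apply (is_RInt_unique (V := R_CompleteNormedModule)) in HI.
  unfold wallis; rewrite HI, cos_PI2, cos_0; ring.
Qed.

(* Integrate [d/dt (cos t sin^(m+1) t) = (m+1) sin^m t - (m+2) sin^(m+2) t]. *)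
Lemma wallis_SS m : wallis (S (S m)) = (INR m + 1) / (INR m + 2) * wallis m.
Proof.
  assert (hm : 0 < INR m + 2) by (pose proof (pos_INR m); lra).
  assert (HI : is_RInt (fun t => (INR m + 1) * sin t ^ m - (INR m + 2) * sin t ^ S (S m))
                 0 (PI / 2) (cos (PI / 2) * sin (PI / 2) ^ S m - cos 0 * sin 0 ^ S m)).
  { apply (is_RInt_derive (V := R_CompleteNormedModule) (fun t => cos t * sin t ^ S m)).
    - intros t _; apply is_derive_Reals.
      replace ((INR m + 1) * sin t ^ m - (INR m + 2) * sin t ^ S (S m))
        with (- sin t * sin t ^ S m + cos t * (INR (S m) * sin t ^ m * cos t)).
      + apply (derivable_pt_lim_mult cos (fun t => sin t ^ S m)); [apply derivable_pt_lim_cos|].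
        apply (derivable_pt_lim_comp sin (fun x => x ^ S m)
                 _ _ _ (derivable_pt_lim_sin t) (derivable_pt_lim_pow _ (S m))).
      + pose proof (sin2_cos2 t) as hsc; unfold Rsqr in hsc.
        rewrite S_INR; simpl.
        replace (cos t * ((INR m + 1) * sin t ^ m * cos t))
          with ((INR m + 1) * sin t ^ m * (cos t * cos t)) by ring.
        replace (cos t * cos t) with (1 - sin t * sin t) by lra; ring.
    - intros; apply (continuous_minus (V := R_NormedModule));
        apply (continuous_scal_r (V := R_NormedModule)); apply continuous_pow, continuous_sin. }
  apply (is_RInt_unique (V := R_CompleteNormedModule)) in HI.
  rewrite cos_PI2, sin_0, pow_i, !Rmult_0_l, Rmult_0_r, Rminus_diag in HI by lia.
  rewrite (RInt_minus (V := R_CompleteNormedModule) (fun t => (INR m + 1) * sin t ^ m)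
             (fun t => (INR m + 2) * sin t ^ S (S m))) in HI.
  2: apply (ex_RInt_scal (V := R_NormedModule) (fun t => sin t ^ m)), ex_RInt_sin_pow.
  2: apply (ex_RInt_scal (V := R_NormedModule) (fun t => sin t ^ S (S m))), ex_RInt_sin_pow.
  rewrite (RInt_scal (V := R_CompleteNormedModule) (fun t => sin t ^ m)),
    (RInt_scal (V := R_CompleteNormedModule) (fun t => sin t ^ S (S m))) in HI
    by apply ex_RInt_sin_pow.
  unfold wallis; set (A := RInt (fun t => sin t ^ m) 0 (PI / 2)) in *.
  set (B := RInt (fun t => sin t ^ S (S m)) 0 (PI / 2)) in *.
  unfold minus, plus, opp, scal in HI; simpl in HI; unfold mult in HI; simpl in HI.
  apply (Rmult_eq_reg_l (INR m + 2)); [|lra].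
  field_simplify; [lra | lra].
Qed.

Lemma wallis_S_le m : wallis (S m) <= wallis m.
Proof.
  pose proof PI_RGT_0.
  apply RInt_le; [lra | apply ex_RInt_sin_pow | apply ex_RInt_sin_pow |]; intros t ht.
  assert (0 <= sin t) by (apply sin_ge_0; lra).
  assert (sin t <= 1) by apply SIN_bound.
  assert (0 <= sin t ^ m) by now apply pow_le.
  simpl; nra.
Qed.

Lemma wallis_pos m : 0 < wallis m.
Proof.
  enough (0 < wallis m /\ 0 < wallis (S m)) by tauto.
  induction m as [|m [IH1 IH2]].
  - rewrite wallis_0, wallis_1; pose proof PI_RGT_0; lra.
  - split; [exact IH2|]; rewrite wallis_SS.
    pose proof (pos_INR m); apply Rmult_lt_0_compat; [apply Rdiv_lt_0_compat|]; lra.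
Qed.

Section LambdaFunction.

Variable Gamma : R -> R.
Hypothesis HGamma : forall x, 0 < x -> is_Gamma x (Gamma x).

Definition Lambda (z : R) : R := Gamma (z + /2) / Gamma (z + 1).

Lemma Lambda_succ z : 0 <= z -> Lambda (z + 1) = (z + /2) / (z + 1) * Lambda z.
Proof.
  intros hz; unfold Lambda.
  replace (z + 1 + /2) with (z + /2 + 1) by ring.
  rewrite (Gamma_succ Gamma HGamma (z + /2)), (Gamma_succ Gamma HGamma (z + 1)) by lra.
  assert (0 < Gamma (z + /2)) by (apply (Gamma_pos Gamma HGamma); lra).
  assert (0 < Gamma (z + 1)) by (apply (Gamma_pos Gamma HGamma); lra).
  field; lra.
Qed.

(* Log-convexity of Gamma at [z + 1] with step [1/2]. *)
Lemma Lambda_half_le z : 0 <= z -> Lambda (z + /2) <= Lambda z.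
Proof.
  intros hz; unfold Lambda.
  pose proof (Gamma_sq_le Gamma HGamma (z + 1) ltac:(lra)) as HC.
  replace (z + 1 - /2) with (z + /2) in HC by field.
  replace (z + /2 + /2) with (z + 1) by field.
  replace (z + /2 + 1) with (z + 1 + /2) by field.
  assert (0 < Gamma (z + /2)) by (apply (Gamma_pos Gamma HGamma); lra).
  assert (0 < Gamma (z + 1)) by (apply (Gamma_pos Gamma HGamma); lra).
  assert (0 < Gamma (z + 1 + /2)) by (apply (Gamma_pos Gamma HGamma); lra).
  apply (Rmult_le_reg_r (Gamma (z + 1 + /2) * Gamma (z + 1))); [nra|].
  replace (Gamma (z + 1) / Gamma (z + 1 + /2) * (Gamma (z + 1 + /2) * Gamma (z + 1)))
    with (Gamma (z + 1) ^ 2) by (field; lra).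
  replace (Gamma (z + /2) / Gamma (z + 1) * (Gamma (z + 1 + /2) * Gamma (z + 1)))
    with (Gamma (z + /2) * Gamma (z + 1 + /2)) by (field; lra).
  exact HC.
Qed.

(* Lambda (m/2) and the Wallis integral satisfy the same two-step recurrence. *)
Lemma Lambda_half_wallis_parity n :
  Lambda (INR (2 * n) / 2) = Gamma (/2) * (2 / PI) * wallis (2 * n)
  /\ Lambda (INR (S (2 * n)) / 2) = 2 / Gamma (/2) * wallis (S (2 * n)).
Proof.
  assert (hc : 0 < Gamma (/2)) by (apply (Gamma_pos Gamma HGamma); lra).
  pose proof PI_RGT_0.
  induction n as [|n [IH1 IH2]].
  - change (2 * 0)%nat with 0%nat; change (S 0) with 1%nat.
    simpl INR; rewrite wallis_0, wallis_1; unfold Lambda.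
    replace (0 / 2 + /2) with (/2) by field; replace (0 / 2 + 1) with 1 by field.
    replace (1 / 2 + /2) with 1 by field; replace (1 / 2 + 1) with (/2 + 1) by field.
    rewrite (Gamma_one Gamma HGamma), (Gamma_succ Gamma HGamma (/2)) by lra.
    split; field; lra.
  - replace (2 * S n)%nat with (S (S (2 * n))) by lia.
    assert (hS : forall m, INR (S (S m)) / 2 = INR m / 2 + 1) by (intros; rewrite !S_INR; field).
    rewrite !hS, !Lambda_succ, !wallis_SS, IH1, IH2
      by (apply Rmult_le_pos; [apply pos_INR | lra]).
    pose proof (pos_INR (2 * n)); rewrite !S_INR; split; field; lra.
Qed.

Lemma Gamma_half_sq_bounds n (r := (INR (2 * n) + 1) / (INR (2 * n) + 2)) :
  PI * r <= Gamma (/2) ^ 2 /\ Gamma (/2) ^ 2 * r <= PI.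
Proof.
  assert (hc : 0 < Gamma (/2)) by (apply (Gamma_pos Gamma HGamma); lra).
  pose proof PI_RGT_0; pose proof (pos_INR (2 * n)).
  assert (hr : 0 < r) by (apply Rdiv_lt_0_compat; lra).
  destruct (Lambda_half_wallis_parity n) as [Ev Od].
  destruct (Lambda_half_wallis_parity (S n)) as [Ev' _].
  replace (2 * S n)%nat with (S (S (2 * n))) in Ev' by lia.
  rewrite wallis_SS in Ev'; fold r in Ev'.
  pose proof (Lambda_half_le (INR (2 * n) / 2) ltac:(lra)) as M1.
  pose proof (Lambda_half_le (INR (S (2 * n)) / 2) ltac:(rewrite S_INR; lra)) as M2.
  replace (INR (2 * n) / 2 + /2) with (INR (S (2 * n)) / 2) in M1 by (rewrite S_INR; field).
  replace (INR (S (2 * n)) / 2 + /2) with (INR (S (S (2 * n))) / 2) in M2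
    by (rewrite !S_INR; field).
  rewrite Ev, Od in M1; rewrite Ev', Od in M2.
  pose proof (wallis_S_le (S (2 * n))) as D1; rewrite wallis_SS in D1; fold r in D1.
  pose proof (wallis_S_le (2 * n)) as D2.
  pose proof (wallis_pos (2 * n)); pose proof (wallis_pos (S (2 * n))).
  set (W0 := wallis (2 * n)) in *; set (W1 := wallis (S (2 * n))) in *.
  split.
  - apply (Rmult_le_reg_r (2 / (Gamma (/2) * PI) * W0)).
    { apply Rmult_lt_0_compat; [apply Rdiv_lt_0_compat; [|apply Rmult_lt_0_compat]|]; lra. }
    replace (PI * r * (2 / (Gamma (/2) * PI) * W0)) with (2 / Gamma (/2) * (r * W0))
      by (field; lra).
    replace (Gamma (/2) ^ 2 * (2 / (Gamma (/2) * PI) * W0)) with (Gamma (/2) * (2 / PI) * W0)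
      by (field; lra).
    eapply Rle_trans; [|exact M1]; apply Rmult_le_compat_l; [|exact D1].
    apply Rlt_le, Rdiv_lt_0_compat; lra.
  - apply (Rmult_le_reg_r (2 / (Gamma (/2) * PI) * W0)).
    { apply Rmult_lt_0_compat; [apply Rdiv_lt_0_compat; [|apply Rmult_lt_0_compat]|]; lra. }
    replace (Gamma (/2) ^ 2 * r * (2 / (Gamma (/2) * PI) * W0))
      with (Gamma (/2) * (2 / PI) * (r * W0)) by (field; lra).
    replace (PI * (2 / (Gamma (/2) * PI) * W0)) with (2 / Gamma (/2) * W0) by (field; lra).
    eapply Rle_trans; [exact M2|]; apply Rmult_le_compat_l; [|exact D2].
    apply Rlt_le, Rdiv_lt_0_compat; lra.
Qed.

Lemma Gamma_half_sq : Gamma (/2) ^ 2 = PI.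
Proof.
  assert (Hr : forall n : nat, 1 - / (INR n + 1) <= (INR (2 * n) + 1) / (INR (2 * n) + 2)).
  { intros n; rewrite mult_INR; simpl INR; pose proof (pos_INR n).
    apply Rminus_le_0; field_simplify; [apply Rdiv_le_0_compat|]; nra. }
  pose proof PI_RGT_0; pose proof (pow2_ge_0 (Gamma (/2))).
  apply Rle_antisym; apply Rle_of_forall_mul_le; try lra; intros n;
    destruct (Gamma_half_sq_bounds n) as [B1 B2];
    (eapply Rle_trans; [apply Rmult_le_compat_l; [lra | apply Hr] | assumption]).
Qed.

Lemma Lambda_half_wallis m : Lambda (INR m / 2) = 2 / sqrt PI * wallis m.
Proof.
  assert (hc : 0 < Gamma (/2)) by (apply (Gamma_pos Gamma HGamma); lra).
  assert (hs : sqrt PI = Gamma (/2)).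
  { rewrite <- Gamma_half_sq, <- Rsqr_pow2; now apply sqrt_Rsqr, Rlt_le. }
  pose proof PI_RGT_0; rewrite hs.
  destruct (Nat.Even_or_Odd m) as [[n ->] | [n ->]].
  - rewrite (proj1 (Lambda_half_wallis_parity n)), <- Gamma_half_sq; field; lra.
  - replace (2 * n + 1)%nat with (S (2 * n)) by lia.
    exact (proj2 (Lambda_half_wallis_parity n)).
Qed.

End LambdaFunction.

(** * The moment functional *)

(* By [moment_pow], the Hankel matrix of the theorem is the moment matrix of this positive
   linear functional. *)
Definition moment (g : R -> R) : R := 2 / sqrt PI * RInt (fun t => g (sin t)) 0 (PI / 2).

Lemma ex_RInt_comp_sin g : continuous_everywhere g -> ex_RInt (fun t => g (sin t)) 0 (PI / 2).
Proof.
  intros Hg; apply (ex_RInt_continuous (V := R_CompleteNormedModule)); intros z _.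
  apply (continuous_comp sin g); [apply continuous_sin | apply Hg].
Qed.

Lemma moment_ext g h : (forall s, g s = h s) -> moment g = moment h.
Proof. intros H; unfold moment; f_equal; apply RInt_ext; intros; apply H. Qed.

Lemma moment_minus g h : continuous_everywhere g -> continuous_everywhere h ->
  moment g - moment h = moment (fun s => g s - h s).
Proof.
  intros Hg Hh; unfold moment.
  rewrite (RInt_minus (V := R_CompleteNormedModule) (fun t => g (sin t)) (fun t => h (sin t)))
    by now apply ex_RInt_comp_sin.
  unfold minus, plus, opp; simpl; ring.
Qed.

Lemma moment_lin_comb r (a : nat -> R) (g : nat -> R -> R) :
  (forall l, continuous_everywhere (g l)) ->
  rsum r (fun l => a l * moment (g l)) = moment (fun s => rsum r (fun l => a l * g l s)).
Proof.
  intros H; induction r as [|r IH]; unfold moment in *; simpl.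
  - rewrite (RInt_const (V := R_CompleteNormedModule)).
    unfold scal; simpl; unfold mult; simpl; ring.
  - assert (Hr : forall l, continuous_everywhere (fun s => a l * g l s))
      by (intros; apply continuous_everywhere_mult; [apply continuous_everywhere_const | apply H]).
    rewrite IH, (RInt_plus (V := R_CompleteNormedModule)
                   (fun t => rsum r (fun l => a l * g l (sin t))) (fun t => a r * g r (sin t))).
    + rewrite (RInt_scal (V := R_CompleteNormedModule) (fun t => g r (sin t)))
        by apply ex_RInt_comp_sin, H.
      unfold plus, scal; simpl; unfold mult; simpl; ring.
    + apply (ex_RInt_comp_sin (fun s => rsum r (fun l => a l * g l s))).
      apply continuous_everywhere_rsum, Hr.
    + apply (ex_RInt_comp_sin (fun s => a r * g r s)), Hr.
Qed.

Lemma moment_abs_le g c : continuous_everywhere g ->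
  (forall s, 0 <= s <= 1 -> Rabs (g s) <= c) -> Rabs (moment g) <= c * sqrt PI.
Proof.
  intros Hg H; pose proof PI_RGT_0.
  assert (hs : 0 < sqrt PI) by now apply sqrt_lt_R0.
  assert (Hc : forall b, RInt (fun _ => b) 0 (PI / 2) = b * (PI / 2)).
  { intros b; rewrite (RInt_const (V := R_CompleteNormedModule)).
    unfold scal; simpl; unfold mult; simpl; ring. }
  assert (Hsin : forall t, 0 < t < PI / 2 -> -c <= g (sin t) <= c).
  { intros t ht; apply Rabs_le_between, H; split; [apply sin_ge_0; lra | apply SIN_bound]. }
  assert (Hlo := RInt_le (fun _ => -c) (fun t => g (sin t)) 0 (PI / 2) ltac:(lra)
                   (ex_RInt_const _ _ _) (ex_RInt_comp_sin g Hg) ltac:(intros; apply Hsin; auto)).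
  assert (Hhi := RInt_le (fun t => g (sin t)) (fun _ => c) 0 (PI / 2) ltac:(lra)
                   (ex_RInt_comp_sin g Hg) (ex_RInt_const _ _ _) ltac:(intros; apply Hsin; auto)).
  rewrite Hc in Hlo, Hhi.
  unfold moment; rewrite Rabs_mult, Rabs_pos_eq by (apply Rlt_le, Rdiv_lt_0_compat; lra).
  replace (c * sqrt PI) with (2 / sqrt PI * (c * (PI / 2)))
    by (rewrite <- (sqrt_sqrt PI) at 2 by lra; field; lra).
  apply Rmult_le_compat_l; [apply Rlt_le, Rdiv_lt_0_compat; lra | apply Rabs_le; lra].
Qed.

Lemma moment_pow Gamma (HGamma : forall x, 0 < x -> is_Gamma x (Gamma x)) m :
  moment (fun s => s ^ m) = Lambda Gamma (INR m / 2).
Proof. now rewrite (Lambda_half_wallis Gamma HGamma). Qed.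

(** * Truncated binomial expansions *)

Fixpoint binomR (n l : nat) : R :=
  match n, l with
  | _, O => 1
  | O, S _ => 0
  | S n', S l' => binomR n' l' + binomR n' (S l')
  end.

Lemma binomR_gt n l : (n < l)%nat -> binomR n l = 0.
Proof.
  revert l; induction n; intros [|l] h; try lia; simpl; [reflexivity|].
  rewrite !IHn by lia; ring.
Qed.

Lemma binomR_0 n : binomR n 0 = 1.
Proof. now destruct n. Qed.

(* The first [d] terms of the expansion of [((1 - s) + s) ^ n]; the truncated subtraction
   [n - l] is harmless because [binomR n l = 0] for [l > n]. *)
Definition trunc_binom (n d : nat) (s : R) : R :=
  rsum d (fun l => binomR n l * ((1 - s) ^ l * s ^ (n - l))).

Lemma continuous_everywhere_trunc_binom n d : continuous_everywhere (trunc_binom n d).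
Proof.
  apply (continuous_everywhere_rsum d (fun l s => binomR n l * ((1 - s) ^ l * s ^ (n - l)))).
  intros l; apply continuous_everywhere_mult;
    [apply continuous_everywhere_const | apply continuous_everywhere_monomial].
Qed.

Lemma trunc_binom_0 d s : trunc_binom 0 (S d) s = 1.
Proof.
  unfold trunc_binom; rewrite rsum_succ_l, rsum_eq_0 by (intros; simpl; ring).
  simpl; ring.
Qed.

Lemma trunc_binom_SS n d s :
  trunc_binom (S n) (S d) s = (1 - s) * trunc_binom n d s + s * trunc_binom n (S d) s.
Proof.
  unfold trunc_binom; rewrite !rsum_succ_l, !rsum_mulr.
  rewrite (rsum_ext d _ (fun l => (1 - s) * (binomR n l * ((1 - s) ^ l * s ^ (n - l)))
                                 + s * (binomR n (S l) * ((1 - s) ^ S l * s ^ (n - S l))))).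
  - rewrite rsum_plus, !binomR_0, !Nat.sub_0_r, Rmult_plus_distr_l, rsum_mulr; simpl; ring.
  - intros l _; cbn [binomR]; destruct (le_lt_dec (S l) n) as [h|h].
    + replace (S n - S l)%nat with (S (n - S l)) by lia.
      replace (n - l)%nat with (S (n - S l)) by lia; simpl; ring.
    + rewrite (binomR_gt n (S l)) by lia; replace (S n - S l)%nat with (n - l)%nat by lia.
      simpl; ring.
Qed.

Lemma pow_succ_add_le a k : 0 <= a -> a ^ S k + INR (S k) * a ^ k <= (a + 1) ^ S k.
Proof.
  intros ha; induction k as [|k IH]; [simpl; lra|].
  assert (0 <= a ^ k) by now apply pow_le.
  assert (HIH : (a + 1) * (a ^ S k + INR (S k) * a ^ k) <= (a + 1) * (a + 1) ^ S k)
    by (apply Rmult_le_compat_l; lra).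
  change ((a + 1) ^ S (S k)) with ((a + 1) * (a + 1) ^ S k).
  change (a ^ S (S k)) with (a * a ^ S k); change (a ^ S k) with (a * a ^ k) in *.
  rewrite !S_INR in *; pose proof (pos_INR k); nra.
Qed.

Lemma trunc_binom_tail n d s : 0 <= s <= 1 ->
  0 <= 1 - trunc_binom n d s <= (INR n * (1 - s)) ^ d / INR (fact d).
Proof.
  intros hs; revert d; induction n as [|n IH]; intros [|d];
    try (unfold trunc_binom; simpl; lra).
  - rewrite trunc_binom_0; simpl INR; rewrite Rmult_0_l, pow_i by lia; unfold Rdiv.
    rewrite Rmult_0_l; lra.
  - rewrite trunc_binom_SS.
    destruct (IH d) as [A1 A2], (IH (S d)) as [B1 B2].
    set (x := 1 - s) in *; set (a := INR n) in *; set (F := INR (fact d)) in *.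
    assert (ha : 0 <= a) by apply pos_INR.
    assert (hx : 0 <= x) by (unfold x; lra).
    assert (hF : 0 < F) by apply lt_0_INR, lt_O_fact.
    assert (hS : 0 < INR (S d)) by (apply lt_0_INR; lia).
    replace (1 - (x * trunc_binom n d s + s * trunc_binom n (S d) s))
      with (x * (1 - trunc_binom n d s) + s * (1 - trunc_binom n (S d) s)) by (unfold x; ring).
    replace (INR (fact (S d))) with (INR (S d) * F) in *
      by (unfold F; rewrite <- mult_INR; reflexivity).
    replace (INR (S n)) with (a + 1) by (unfold a; rewrite S_INR; ring).
    rewrite !Rpow_mult_distr in *.
    split; [apply Rplus_le_le_0_compat; apply Rmult_le_pos; lra|].
    assert (0 <= x ^ d) by (apply pow_le; lra).
    assert (E1 : x * (1 - trunc_binom n d s) <= x * (a ^ d * x ^ d / F))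
      by (apply Rmult_le_compat_l; lra).
    assert (E2 : s * (1 - trunc_binom n (S d) s) <= a ^ S d * x ^ S d / (INR (S d) * F)).
    { rewrite <- (Rmult_1_l (_ / _)); apply Rmult_le_compat; lra. }
    assert (E3 : (a ^ S d + INR (S d) * a ^ d) * x ^ S d / (INR (S d) * F)
                 <= (a + 1) ^ S d * x ^ S d / (INR (S d) * F)).
    { unfold Rdiv; apply Rmult_le_compat_r;
        [apply Rlt_le, Rinv_0_lt_compat, Rmult_lt_0_compat; lra|].
      apply Rmult_le_compat_r; [apply pow_le; lra | now apply pow_succ_add_le]. }
    eapply Rle_trans; [apply Rplus_le_compat; [exact E1 | exact E2] |].
    replace (x * (a ^ d * x ^ d / F) + a ^ S d * x ^ S d / (INR (S d) * F))
      with ((a ^ S d + INR (S d) * a ^ d) * x ^ S d / (INR (S d) * F))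
      by (change (x ^ S d) with (x * x ^ d); field; lra).
    exact E3.
Qed.

(* The factor [s ^ j <= exp (- j (1 - s))] absorbs [(j (1 - s)) ^ d / d! <= exp (j (1 - s))]. *)
Lemma pow_mul_trunc_binom_tail n d j k s rho : 0 <= s <= 1 -> 0 <= rho ->
  INR n <= rho * INR j -> 0 <= s ^ (j + k) * (1 - trunc_binom n d s) <= rho ^ d.
Proof.
  intros hs hr hn; destruct (trunc_binom_tail n d s hs) as [B1 B2].
  set (x := 1 - s) in *; assert (hx : 0 <= x) by (unfold x; lra).
  assert (hsj : s ^ (j + k) <= exp (- (INR j * x))).
  { rewrite pow_add; apply Rle_trans with (s ^ j).
    - rewrite <- (Rmult_1_r (s ^ j)) at 2; apply Rmult_le_compat_l; [apply pow_le; lra|].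
      rewrite <- (pow1 k); apply pow_incr; lra.
    - replace (- (INR j * x)) with (INR j * - x) by ring; rewrite <- exp_mul_INR.
      apply pow_incr; pose proof (exp_ineq1_le (- x)); unfold x in *; lra. }
  assert (hF : 0 < INR (fact d)) by apply lt_0_INR, lt_O_fact.
  assert (hq : (INR n * x) ^ d / INR (fact d) <= rho ^ d * exp (INR j * x)).
  { apply Rle_trans with (rho ^ d * ((INR j * x) ^ d / INR (fact d))).
    - unfold Rdiv; rewrite <- Rmult_assoc, <- Rpow_mult_distr.
      apply Rmult_le_compat_r; [apply Rlt_le, Rinv_0_lt_compat; lra|].
      apply pow_incr; split; [apply Rmult_le_pos; [apply pos_INR | lra]|].
      rewrite <- Rmult_assoc; apply Rmult_le_compat_r; lra.
    - apply Rmult_le_compat_l; [now apply pow_le|].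
      apply pow_div_fact_le_exp, Rmult_le_pos; [apply pos_INR | lra]. }
  assert (0 <= s ^ (j + k)) by (apply pow_le; lra).
  split; [apply Rmult_le_pos; lra|].
  apply Rle_trans with (exp (- (INR j * x)) * (rho ^ d * exp (INR j * x))).
  - apply Rmult_le_compat; lra.
  - rewrite Rmult_comm, Rmult_assoc, <- exp_plus, Rplus_opp_r, exp_0; lra.
Qed.

Lemma pow_mul_trunc_binom n j k d s :
  s ^ (j + k) * trunc_binom n d s
  = rsum d (fun l => binomR n l * ((1 - s) ^ l * s ^ (n + j - l + k))).
Proof.
  unfold trunc_binom; rewrite rsum_mulr; apply rsum_ext; intros l _; cbv beta.
  destruct (le_lt_dec l n) as [h|h].
  - replace (n + j - l + k)%nat with (n - l + (j + k))%nat by lia.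
    rewrite (pow_add s (n - l)); ring.
  - rewrite binomR_gt by lia; ring.
Qed.

(** * Block approximation of the Hankel matrix *)

Section Blocks.

Variables (N p : nat) (beta : R).

(* Block [i < p] holds the [j] with [N beta^(i+1) < j <= N beta^i]; the last block also takes
   every smaller positive [j]. *)
Definition in_block (i j : nat) : Prop :=
  (i < p)%nat /\ (0 < j)%nat /\ INR j <= INR N * beta ^ i
  /\ (i = pred p \/ INR N * beta ^ S i < INR j).

Definition block_top (i : nat) : nat := Z.to_nat (Zfloor (INR N * beta ^ i)).

Lemma in_block_dec i j : {in_block i j} + {~ in_block i j}.
Proof.
  unfold in_block.
  destruct (lt_dec i p); [|right; tauto].
  destruct (lt_dec 0 j); [|right; tauto].
  destruct (Rle_dec (INR j) (INR N * beta ^ i)); [|right; tauto].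
  destruct (Nat.eq_dec i (pred p)); [left; tauto|].
  destruct (Rlt_dec (INR N * beta ^ S i) (INR j)); [left | right]; tauto.
Qed.

Hypothesis hbeta : 0 < beta < 1.
Hypothesis hp : (0 < p)%nat.
Hypothesis hNp : INR N * beta ^ p <= 1.

Lemma in_block_exists j : (1 <= j <= N)%nat -> exists i, in_block i j.
Proof.
  intros hj.
  assert (G : forall r i, (i + r = pred p)%nat -> INR j <= INR N * beta ^ i ->
            exists i', (i <= i' <= pred p)%nat /\ in_block i' j).
  { induction r as [|r IH]; intros i hir hi.
    - exists i; repeat split; auto; lia.
    - destruct (Rlt_dec (INR N * beta ^ S i) (INR j)) as [h|h].
      + exists i; repeat split; auto; lia.
      + destruct (IH (S i) ltac:(lia) ltac:(lra)) as (i' & h1 & h2).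
        exists i'; split; [lia | exact h2]. }
  assert (H0 : INR j <= INR N * beta ^ 0) by (simpl; rewrite Rmult_1_r; apply le_INR; lia).
  destruct (G (pred p) 0%nat ltac:(lia) H0) as (i & h1 & h2).
  now exists i.
Qed.

Lemma in_block_unique i i' j : in_block i j -> in_block i' j -> i = i'.
Proof.
  intros (ai & _ & a2 & a3) (bi & _ & b2 & b3).
  assert (HN : 0 <= INR N) by apply pos_INR.
  assert (Hmono : forall m n, (m <= n)%nat -> INR N * beta ^ n <= INR N * beta ^ m)
    by (intros; apply Rmult_le_compat_l; [lra | apply pow_le_pow_le_1; [lra | assumption]]).
  destruct (Nat.lt_total i i') as [h | [h | h]]; auto.
  - destruct a3 as [a3 | a3]; [lia|]; pose proof (Hmono (S i) i' h); lra.
  - destruct b3 as [b3 | b3]; [lia|]; pose proof (Hmono (S i') i h); lra.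
Qed.

Lemma in_block_top i j : in_block i j ->
  (j <= block_top i)%nat /\ INR (block_top i - j) <= (1 - beta) / beta * INR j.
Proof.
  intros (hi & h1 & h2 & h3); unfold block_top.
  set (y := INR N * beta ^ i) in *.
  assert (hz : (Z.of_nat j <= Zfloor y)%Z) by (apply Zfloor_lub; now rewrite <- INR_IZR_INZ).
  assert (hjB : (j <= Z.to_nat (Zfloor y))%nat) by lia.
  assert (hB : INR (Z.to_nat (Zfloor y)) <= y)
    by (rewrite INR_IZR_INZ, Z2Nat.id by lia; apply Zfloor_bound).
  assert (hby : beta * y <= INR j).
  { assert (1 <= INR j) by (apply (le_INR 1); lia).
    destruct h3 as [-> | h3]; unfold y.
    - replace (beta * (INR N * beta ^ pred p)) with (INR N * beta ^ p); [lra|].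
      replace p with (S (pred p)) at 1 by lia; simpl; ring.
    - simpl in h3; lra. }
  split; [exact hjB|]; rewrite minus_INR by exact hjB.
  assert (y <= INR j / beta) by (apply (Rmult_le_reg_l beta); [lra|]; field_simplify; lra).
  replace ((1 - beta) / beta * INR j) with (INR j / beta - INR j) by (field; lra); lra.
Qed.

Variable d : nat.

Definition block_coef (i l j : nat) : R :=
  if in_block_dec i j then binomR (block_top i - j) l else 0.

Definition block_moment (i l k : nat) : R :=
  moment (fun s => (1 - s) ^ l * s ^ (block_top i - l + k)).

(* On block [i], [s ^ (j + k)] is replaced by its product with the truncated expansion of
   [1 = ((1 - s) + s) ^ (top - j)], which is a sum of [d] separable terms in [(j, k)]. *)
Definition hankel_approx (j k : nat) : R :=
  (if Nat.eq_dec j 0 then moment (fun s => s ^ k) else 0)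
  + rsum p (fun i => rsum d (fun l => block_coef i l j * block_moment i l k)).

Lemma hankel_approx_rank n : (0 < d)%nat -> rank_at_most n hankel_approx (S (p * d)).
Proof.
  intros hd; apply (rank_at_most_blocks n p d _ (fun j => if Nat.eq_dec j 0 then 1 else 0)
                      (fun k => moment (fun s => s ^ k)) block_coef block_moment hd).
  intros j k _ _; unfold hankel_approx; destruct (Nat.eq_dec j 0); ring.
Qed.

Lemma hankel_approx_0 k : hankel_approx 0 k = moment (fun s => s ^ k).
Proof.
  unfold hankel_approx; rewrite rsum_eq_0; [simpl; ring|]; intros i _.
  apply rsum_eq_0; intros l _; unfold block_coef.
  destruct (in_block_dec i 0) as [(_ & h & _) | _]; [lia | ring].
Qed.

Lemma hankel_approx_block i j k : in_block i j ->
  hankel_approx j k = moment (fun s => s ^ (j + k) * trunc_binom (block_top i - j) d s).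
Proof.
  intros hij; unfold hankel_approx.
  destruct (Nat.eq_dec j 0) as [-> | _]; [destruct hij as (_ & h & _); lia|].
  rewrite Rplus_0_l, (rsum_eq_single p _ i (proj1 hij)).
  - destruct (in_block_top i j hij) as [hjB _].
    set (n := (block_top i - j)%nat).
    rewrite (moment_ext _ _ (fun s => pow_mul_trunc_binom n j k d s)).
    replace (n + j)%nat with (block_top i) by (unfold n; lia).
    rewrite <- moment_lin_comb by (intros; apply continuous_everywhere_monomial).
    apply rsum_ext; intros l _; unfold block_coef.
    destruct (in_block_dec i j); [reflexivity | contradiction].
  - intros i' _ hne; apply rsum_eq_0; intros l _; unfold block_coef.
    destruct (in_block_dec i' j) as [h | _]; [|ring].
    exfalso; exact (hne (in_block_unique i' i j h hij)).
Qed.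

Lemma hankel_approx_error j k : (j <= N)%nat ->
  Rabs (moment (fun s => s ^ (j + k)) - hankel_approx j k) <= ((1 - beta) / beta) ^ d * sqrt PI.
Proof.
  intros hj; set (rho := (1 - beta) / beta).
  assert (hrho : 0 < rho) by (apply Rdiv_lt_0_compat; lra).
  destruct (Nat.eq_dec j 0) as [-> | hj0].
  - rewrite hankel_approx_0, Rminus_diag, Rabs_R0.
    apply Rmult_le_pos; [apply pow_le; lra | apply sqrt_pos].
  - destruct (in_block_exists j ltac:(lia)) as [i hij].
    destruct (in_block_top i j hij) as [_ hgap].
    rewrite (hankel_approx_block i j k hij), moment_minus.
    + apply moment_abs_le.
      * apply continuous_everywhere_minus; [|apply continuous_everywhere_mult];
          auto using continuous_everywhere_pow, continuous_everywhere_trunc_binom.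
      * intros s hs.
        replace (s ^ (j + k) - s ^ (j + k) * trunc_binom (block_top i - j) d s)
          with (s ^ (j + k) * (1 - trunc_binom (block_top i - j) d s)) by ring.
        pose proof (pow_mul_trunc_binom_tail _ d j k s rho hs (Rlt_le _ _ hrho) hgap).
        rewrite Rabs_pos_eq; lra.
    + apply continuous_everywhere_pow.
    + apply continuous_everywhere_mult;
        [apply continuous_everywhere_pow | apply continuous_everywhere_trunc_binom].
Qed.

End Blocks.

Lemma pow_Zceil_log_le b x : 0 < b < 1 -> 1 < x ->
  (0 < Z.to_nat (Zceil (ln x / ln (/ b))))%nat /\ x * b ^ Z.to_nat (Zceil (ln x / ln (/ b))) <= 1.
Proof.
  intros hb hx.
  assert (hlb : 0 < ln (/ b)).
  { rewrite <- ln_1; apply ln_increasing; [lra|].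
    rewrite <- Rinv_1; apply Rinv_lt_contravar; lra. }
  assert (hlx : 0 < ln x) by (rewrite <- ln_1; apply ln_increasing; lra).
  set (r := ln x / ln (/ b)).
  assert (hr : 0 < r) by now apply Rdiv_lt_0_compat.
  destruct (Zceil_bound r) as [_ hc].
  assert (hz : (0 < Zceil r)%Z) by (apply lt_IZR; lra).
  assert (hn : r <= INR (Z.to_nat (Zceil r))) by (rewrite INR_IZR_INZ, Z2Nat.id by lia; exact hc).
  split; [lia|].
  set (n := Z.to_nat (Zceil r)) in *.
  assert (ln x <= INR n * ln (/ b)).
  { apply (Rmult_le_compat_r (ln (/ b))) in hn; [|lra].
    unfold r in hn; replace (ln x / ln (/ b) * ln (/ b)) with (ln x) in hn by (field; lra).
    exact hn. }
  rewrite <- Rpower_pow by lra; unfold Rpower.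
  rewrite <- (exp_ln x) at 1 by lra; rewrite <- exp_plus, <- exp_0; apply exp_le_compat.
  replace (INR n * ln b) with (- (INR n * ln (/ b))) by (rewrite ln_Rinv by lra; ring); lra.
Qed.

Lemma sqrt_PI_le_exp_1 : sqrt PI <= exp 1.
Proof.
  pose proof PI_4; pose proof (exp_ineq1_le 1).
  apply Rle_trans with 2; [|lra].
  rewrite <- (sqrt_square 2) by lra; apply sqrt_le_1_alt; lra.
Qed.

Lemma mul_sqrt_PI_le r eps : 0 < eps -> 0 <= r -> exp 1 / eps * r <= 1 -> r * sqrt PI <= eps.
Proof.
  intros he hr H; pose proof (exp_pos 1).
  apply Rle_trans with (eps / exp 1 * exp 1); [|right; field; lra].
  apply Rmult_le_compat; [lra | apply sqrt_pos | | apply sqrt_PI_le_exp_1].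
  apply (Rmult_le_reg_l (exp 1 / eps)); [apply Rdiv_lt_0_compat; lra|].
  replace (exp 1 / eps * (eps / exp 1)) with 1 by (field; lra); exact H.
Qed.

Theorem mainTheorem6
  (Gamma : R -> R) (HGamma : forall x, 0 < x -> is_Gamma x (Gamma x))
  (N : nat) (eps beta : R) :
  (1 < N)%nat -> 0 < eps -> eps < exp 1 -> / 2 < beta -> beta < 1 ->
  let K : Z := (Zceil (ln (INR N) / ln (/ beta)) *
                Zceil (ln (exp 1 / eps) / ln (beta / (1 - beta))))%Z in
  let Lambda : R -> R := fun z => Gamma (z + / 2) / Gamma (z + 1) in
  let H : nat -> nat -> R := fun j k => Lambda ((INR j + INR k) / 2) in
  exists Ht : nat -> nat -> R,
    rank_at_most (N + 1) Ht (Z.to_nat (K + 1)) /\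
    forall j k, (j <= N)%nat -> (k <= N)%nat -> Rabs (H j k - Ht j k) <= eps.
Proof.
  intros hN he1 he2 hb1 hb2 K Lambda H.
  assert (hbeta : 0 < beta < 1) by lra.
  set (rho := (1 - beta) / beta).
  assert (hrho : 0 < rho < 1).
  { split; [apply Rdiv_lt_0_compat; lra|].
    apply (Rmult_lt_reg_r beta); [lra|]; unfold rho; field_simplify; lra. }
  destruct (pow_Zceil_log_le beta (INR N) hbeta) as [hp hNp]; [apply (lt_INR 1); lia|].
  destruct (pow_Zceil_log_le rho (exp 1 / eps) hrho) as [hd hrd].
  { apply (Rmult_lt_reg_r eps); [lra|]; field_simplify; lra. }
  replace (/ rho) with (beta / (1 - beta)) in hd, hrd by (unfold rho; field; lra).
  set (p := Z.to_nat _) in hp, hNp; set (d := Z.to_nat _) in hd, hrd.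
  exists (hankel_approx N p beta d); split.
  - replace (Z.to_nat (K + 1)) with (S (p * d)).
    + now apply hankel_approx_rank.
    + unfold K, p, d; rewrite Z2Nat.inj_add, Z2Nat.inj_mul by lia; simpl; lia.
  - intros j k hj hk.
    replace (H j k) with (moment (fun s => s ^ (j + k))).
    2: { rewrite (moment_pow Gamma HGamma); unfold H, Lambda; rewrite plus_INR; reflexivity. }
    eapply Rle_trans; [apply hankel_approx_error; auto|]; fold rho.
    apply mul_sqrt_PI_le; [lra | apply pow_le; lra | exact hrd].
Qed.
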